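(* Let $k$ be a field, $n\ge3$, $A=k[X_1,\dots,X_{n-1}]$ with $\deg X_i=1$, $\mathfrak m=(X_1,\dots,X_{n-1})$, $d\ge1$, $f_1,\dots,f_n\in A_d$ nonzero, $I=(f_1,\dots,f_n)$, and $h:k[T_1,\dots,T_n]\to A$, $T_i\mapsto f_i$. Suppose $I$ is of linear type outside $V(\mathfrak m)$, and let $\eta$ be an integer such that $H^0_{\mathfrak m}(\mathrm{Sym}_A(I))_\nu=0$ for all $\nu\ge\eta$. Then $\mathrm{ann}_{k[T_1,\dots,T_n]}(\mathrm{Sym}_A(I)_\nu)=\ker(h)$ for all $\nu\ge\eta$.
   Context: $\mathrm{Sym}_A(I)=A[T_1,\dots,T_n]/\ker\alpha$, where $\alpha(T_i)=f_i$ and $\ker\alpha$ is generated by the $\sum b_iT_i$ with $b_i\in A$, $\sum b_if_i=0$; it is bigraded, and $\mathrm{Sym}_A(I)_\nu$ denotes its component of degree $\nu$ with respect to the grading of $A$ (the image of $A_\nu[T_1,\dots,T_n]$), a $k[T_1,\dots,T_n]$-module. $H^0_{\mathfrak m}(N)$ is the submodule of elements annihilated by a power of $\mathfrak m$. $I$ is of linear type outside $V(\mathfrak m)$ if for every prime $\mathfrak p\not\supseteq\mathfrak m$, $\mathrm{Sym}_{A_{\mathfrak p}}(I_{\mathfrak p})\to\mathrm{Rees}_{A_{\mathfrak p}}(I_{\mathfrak p})$ is an isomorphism. *)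

From HB Require Import structures.
From mathcomp Require Import all_boot all_order all_algebra.
From mathcomp Require Import mpoly.
Set Implicit Arguments. Unset Strict Implicit. Unset Printing Implicit Defensive.
Import Order.TTheory GRing.Theory.
Local Open Scope ring_scope.

Definition ideal_gen (R : comRingType) (S : R -> Prop) (x : R) : Prop :=
  exists (m : nat) (c g : 'I_m -> R), (forall i, S (g i)) /\ x = \sum_(i < m) c i * g i.

Definition prime_ideal (R : comRingType) (p : R -> Prop) : Prop :=
  [/\ p 0, (forall a b, p a -> p b -> p (a + b)),
      (forall a b, p b -> p (a * b)), ~ p 1 &
      (forall a b, p (a * b) -> p a \/ p b)].

Section Sym.
Variables (k : fieldType) (n : nat).

(* A = k[X_1,...,X_{n-1}] (standard grading),  k[T] = k[T_1,...,T_n],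
   A[T] = A[T_1,...,T_n] is {mpoly A[n]} (bigraded: X-degree from the
   coefficients, T-degree from the monomials). *)
Local Notation A := {mpoly k[n.-1]}.
Local Notation AT := {mpoly A[n]}.

Variable f : 'I_n -> A.

Definition mIdeal (a : A) : Prop := ideal_gen (fun x : A => exists i, x = 'X_i) a.

Definition hmap (P : {mpoly k[n]}) : A := mmap (@mpolyC _ k) f P.

(* k[T] -> A[T] (structure of k[T]-module on A[T]) *)
Definition embT (P : {mpoly k[n]}) : AT := map_mpoly (@mpolyC _ k) P.

Definition symrel (G : AT) : Prop :=
  exists b : 'I_n -> A, \sum_(i < n) b i * f i = 0 /\
                        G = \sum_(i < n) (b i)%:MP * 'X_i.

(* ker alpha, so that Sym_A(I) = A[T] / symKer *)
Definition symKer (G : AT) : Prop := ideal_gen symrel G.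

(* the map A[T] -> A[t], T_i |-> f_i t, whose image is Rees_A(I) *)
Definition reesMap (G : AT) : {poly A} :=
  mmap (fun a : A => a%:P) (fun i => (f i)%:P * 'X) G.

Definition Xhomog (nu : nat) (G : AT) : Prop :=
  forall m, G@_m \is nu.-homog.

(* I is of linear type outside V(m): for every prime p of A not containing m,
   Sym_{A_p}(I_p) = Sym_A(I)_p -> Rees_A(I)_p = Rees_{A_p}(I_p) is an iso,
   i.e. (the map being onto) every element of the kernel of
   Sym_A(I) -> Rees_A(I) is killed by some s not in p. *)
Definition linear_type_outside_m : Prop :=
  forall p : A -> Prop, prime_ideal p -> ~ (forall a, mIdeal a -> p a) ->
  forall G : AT, reesMap G = 0 -> exists s : A, ~ p s /\ symKer (s%:MP * G).

(* H^0_m(Sym_A(I))_nu = 0 : a class of X-degree nu killed by m^N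
   (generated by the monomials of degree N) is zero *)
Definition H0m_vanishes_at (nu : nat) : Prop :=
  forall G : AT, Xhomog nu G ->
  (exists N : nat, forall a : 'X_{1..n.-1}, mdeg a = N -> symKer (('X_[a] : A)%:MP * G)) ->
  symKer G.

Definition annSym (nu : nat) (P : {mpoly k[n]}) : Prop :=
  forall G : AT, Xhomog nu G -> symKer (embT P * G).

End Sym.

From HB Require Import structures.
From mathcomp Require Import all_boot all_order all_algebra.
From mathcomp Require Import mpoly.
From mathcomp Require Import boolp classical_sets.
From mathcomp Require Import ring.
Import GRing.Theory.
Local Open Scope ring_scope.
Local Open Scope classical_set_scope.
Set Implicit Arguments. Unset Strict Implicit. Unset Printing Implicit Defensive.

(* Send T_i to f_i t.  Since the f_i all have degree d > 0, substituting t^d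
   for t relates this map to h, so a form P of k[T] maps to zero in the Rees
   algebra A[t] exactly when h P = 0; this gives one inclusion, by taking any
   nonzero monomial of degree nu.  Conversely, if h P = 0 then P G lies in the
   kernel of Sym_A(I) -> Rees_A(I) for every G of X-degree nu.  Linear type
   outside V(m) makes this kernel m-torsion: were no power of some x in m to
   kill P G, a prime ideal containing its annihilator and avoiding the powers
   of x would not contain m, contradicting linear type there.  A power of m
   then kills P G, which therefore vanishes since H^0_m(Sym_A(I))_nu = 0. *)

Definition is_ideal (R : comNzRingType) (J : R -> Prop) :=
  [/\ J 0, (forall a b, J a -> J b -> J (a + b)) & (forall a b, J b -> J (a * b))].

Section IdealGen.
Variables (R : comNzRingType) (S : R -> Prop).

Lemma ideal_gen_mem g : S g -> ideal_gen S g.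
Proof.
by move=> Sg; exists 1%N, (fun _ => 1), (fun _ => g); rewrite big_ord1 mul1r.
Qed.

Lemma ideal_gen_is_ideal : is_ideal (ideal_gen S).
Proof.
split.
- by exists 0%N, (fun _ => 0), (fun _ => 0); split; [case | rewrite big_ord0].
- move=> _ _ [m1 [c1 [g1 [Sg1 ->]]]] [m2 [c2 [g2 [Sg2 ->]]]].
  pose c i := match split i with inl j => c1 j | inr j => c2 j end.
  pose g i := match split i with inl j => g1 j | inr j => g2 j end.
  exists (m1 + m2)%N, c, g; split; first by move=> i; rewrite /g; case: (split i).
  rewrite big_split_ord /=; congr (_ + _); apply: eq_bigr => i _;
    by rewrite /c /g ?(unsplitK (inl _ : 'I_m1 + 'I_m2))
                     ?(unsplitK (inr _ : 'I_m1 + 'I_m2)).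
- move=> a _ [m [c [g [Sg ->]]]]; exists m, (fun i => a * c i), g; split=> //.
  by rewrite mulr_sumr; apply: eq_bigr => i _; rewrite mulrA.
Qed.

End IdealGen.

Section PrimeAvoidingPowers.
Variables (R : comNzRingType) (x : R).

Definition avoids_powers (X : R -> Prop) := forall e, ~ X (x ^+ e).

Lemma maximal_avoiding_powers_prime (P : R -> Prop) :
  is_ideal P -> avoids_powers P ->
  (forall Q, is_ideal Q -> P `<=` Q -> avoids_powers Q -> Q `<=` P) ->
  prime_ideal P.
Proof.
case=> P0 PD PM avP maxP.
have power_mod a : ~ P a -> exists e r z, P z /\ x ^+ e = z + r * a.
  move=> NPa; apply: contrapT => noe.
  pose Q y := exists r z, P z /\ y = z + r * a.
  have /(_ a) QP : Q `<=` P.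
    apply: maxP.
    - split; first by exists 0, 0; rewrite mul0r addr0.
        move=> _ _ [r1 [z1 [Pz1 ->]]] [r2 [z2 [Pz2 ->]]].
        exists (r1 + r2), (z1 + z2); split; first exact: PD.
        by rewrite mulrDl addrACA.
      move=> c _ [r [z [Pz ->]]]; exists (c * r), (c * z); split; first exact: PM.
      by rewrite mulrDr mulrA.
    - by move=> y Py; exists 0, y; rewrite mul0r addr0.
    - by move=> e [r [z [Pz E]]]; apply: noe; exists e, r, z.
  by apply/NPa/QP; exists 1, 0; rewrite add0r mul1r.
split=> //; first by move=> P1; apply: (avP 0%N); rewrite expr0.
move=> a b Pab; apply: contrapT => /not_orP [NPa NPb].
have [e [r1 [z1 [Pz1 E1]]]] := power_mod a NPa.
have [l [r2 [z2 [Pz2 E2]]]] := power_mod b NPb.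
apply: (avP (e + l)%N).
have -> : x ^+ (e + l) = x ^+ l * z1 + (r1 * a) * z2 + (r1 * r2) * (a * b).
  by rewrite exprD E1 E2; ring.
by apply: (PD); [apply: (PD) |]; apply: (PM).
Qed.

Lemma exists_maximal_avoiding_powers (J : R -> Prop) :
  is_ideal J -> avoids_powers J ->
  exists P, [/\ is_ideal P, J `<=` P, avoids_powers P &
    forall Q, is_ideal Q -> P `<=` Q -> avoids_powers Q -> Q `<=` P].
Proof.
move=> IJ avJ.
pose admissible X := [/\ is_ideal X, J `<=` X & avoids_powers X].
(* the empty set is added so that the empty chain has an upper bound *)
have [|P [[P0|admP] maxP]] := @Zorn_bigcup R (fun X => X = set0 \/ admissible X).
- move=> F FP Ftot.
  have admF X a : F X -> X a -> admissible X.
    by move=> FX Xa; case: (FP X FX) => // X0; rewrite X0 in Xa.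
  have [[X0 FX0 [a0 X0a0]]|empty] :=
    pselect (exists2 X, F X & exists a, X a); last first.
    left; apply/seteqP; split=> // a [X FX Xa].
    by apply: empty; exists X => //; exists a.
  right; split; first split.
  + by exists X0 => //; have [[]] := admF X0 a0 FX0 X0a0.
  + move=> a b [X FX Xa] [Y FY Yb].
    have [XY|YX] := Ftot X Y FX FY.
      by exists Y => //; have [[_ YD _] _ _] := admF Y b FY Yb; apply: YD => //; exact: XY.
    by exists X => //; have [[_ XD _] _ _] := admF X a FX Xa; apply: XD => //; exact: YX.
  + move=> a b [X FX Xb]; exists X => //.
    by have [[_ _ XM] _ _] := admF X b FX Xb; apply: XM.
  + by move=> a Ja; exists X0 => //; have [_ JX0 _] := admF X0 a0 FX0 X0a0; exact: JX0.
  + by move=> e [X FX Xe]; have [_ _ avX] := admF X _ FX Xe; exact: avX Xe.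
- exfalso; apply: (maxP J); last by right; split.
  by rewrite P0; split=> // /(_ 0); case: IJ => J0 _ _; exact.
- case: admP => IP JP avP; exists P; split=> // Q IQ PQ avQ.
  apply: contrapT => nQP; apply: (maxP Q); first by split.
  by right; split=> //; apply: subset_trans JP PQ.
Qed.

Lemma exists_prime_avoiding_powers (J : R -> Prop) :
  is_ideal J -> avoids_powers J -> exists p, [/\ prime_ideal p, J `<=` p & ~ p x].
Proof.
move=> IJ avJ; have [P [IP JP avP maxP]] := exists_maximal_avoiding_powers IJ avJ.
exists P; split=> //; first exact: maximal_avoiding_powers_prime.
by move=> Px; apply: (avP 1%N); rewrite expr1.
Qed.

End PrimeAvoidingPowers.

Lemma rmorph_mmap (R S S' : nzRingType) (m : nat) (phi : {rmorphism S -> S'})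
    (g : R -> S) (h : 'I_m -> S) (P : {mpoly R[m]}) :
  phi (mmap g h P) = mmap (phi \o g) (phi \o h) P.
Proof.
rewrite /mmap rmorph_sum; apply: eq_bigr => a _; rewrite rmorphM rmorph_prod.
by congr (_ * _); apply: eq_bigr => i _; rewrite rmorphXn.
Qed.

Lemma eq_mmap (R S : nzRingType) (m : nat) (g1 g2 : R -> S) (h1 h2 : 'I_m -> S) :
  g1 =1 g2 -> h1 =1 h2 -> mmap g1 h1 =1 mmap g2 h2.
Proof.
move=> eq_g eq_h P; apply: eq_bigr => a _; rewrite eq_g; congr (_ * _).
exact: mmap1_eq.
Qed.

Lemma monomials_in_ideal (R : comNzRingType) (m : nat) (J : {mpoly R[m]} -> Prop)
    (e : 'I_m -> nat) :
  (forall a b, J b -> J (a * b)) -> (forall i, J ('X_i ^+ e i)) ->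
  forall a : 'X_{1..m}, mdeg a = (\sum_i e i).+1 -> J 'X_[a].
Proof.
move=> JM Je a deg_a.
have [/existsP [i le_ei_ai] | /existsPn lt_a_e] := boolP [exists i, e i <= a i]%N.
  have -> : a = ((a - U_(i) *+ e i) + U_(i) *+ e i)%MM.
    apply/mnmP => j; rewrite mnmDE mnmBE mulmnE mnm1E.
    by case: (eqVneq i j) => [<-|_]; rewrite ?mul1n ?subnK ?mul0n ?subn0 ?addn0.
  by rewrite mpolyXD -mpolyXn; apply: JM.
suff : (mdeg a <= \sum_i e i)%N by rewrite deg_a ltnn.
by rewrite mdegE; apply: leq_sum => i _; rewrite ltnW // ltnNge lt_a_e.
Qed.

Section SubstXt.
Variables (R : comNzRingType) (m : nat).

Definition substXt (a : {mpoly R[m]}) : {poly {mpoly R[m]}} :=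
  mmap (polyC \o (@mpolyC _ R)) (fun j => ('X_j)%:P * 'X) a.

Lemma substXt_homog e (a : {mpoly R[m]}) : a \is e.-homog -> substXt a = a%:P * 'X^e.
Proof.
move=> /dhomogP ha; rewrite /substXt /mmap [in RHS](mpolyE a) rmorph_sum /=.
rewrite mulr_suml !big_seq; apply: eq_bigr => b b_a.
rewrite -(ha b b_a) /mmap1 /=.
under eq_bigr do rewrite exprMn.
rewrite big_split /= prodrXr -mdegE -mul_mpolyC rmorphM /= -mulrA; congr (_ * _).
by rewrite mpolyXE_id rmorph_prod; congr (_ * _); apply: eq_bigr => i _; rewrite rmorphXn.
Qed.

End SubstXt.

Section SymRees.
Variables (k : fieldType) (n : nat) (f : 'I_n -> {mpoly k[n.-1]}).
Local Notation A := {mpoly k[n.-1]}.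
Local Notation AT := {mpoly A[n]}.

HB.instance Definition _ := GRing.RMorphism.copy (reesMap f)
  (mmap (@polyC A) (fun i => (f i)%:P * 'X)).

Lemma reesMapC (c : A) : reesMap f c%:MP = c%:P.
Proof. exact: mmapC. Qed.

Lemma reesMapX i : reesMap f 'X_i = (f i)%:P * 'X.
Proof. by rewrite /reesMap mmapX mmap1U. Qed.

Lemma reesMap_symKer (G : AT) : symKer f G -> reesMap f G = 0.
Proof.
case=> m [c [g [Sg ->]]]; rewrite rmorph_sum big1 // => i _.
have [b [Hb ->]] := Sg i; rewrite rmorphM rmorph_sum /=.
suff -> : \sum_(j < n) reesMap f ((b j)%:MP * 'X_j) = (\sum_(j < n) b j * f j)%:P * 'X.
  by rewrite Hb mul0r mulr0.
rewrite rmorph_sum mulr_suml; apply: eq_bigr => j _.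
by rewrite rmorphM /= reesMapC reesMapX rmorphM mulrA.
Qed.

Lemma Xhomog_mpolyC nu (a : A) : a \is nu.-homog -> Xhomog nu (a%:MP : AT).
Proof.
by move=> ha m; rewrite mcoeffC; case: (m == 0%MM); rewrite ?mulr1 ?mulr0 ?rpred0.
Qed.

Lemma Xhomog_embTM nu (P : {mpoly k[n]}) (G : AT) : Xhomog nu G -> Xhomog nu (embT P * G).
Proof.
move=> hG m; rewrite mcoeffM; apply: rpred_sum => b _.
by rewrite /embT mcoeff_map_mpoly /= mul_mpolyC; apply: rpredZ.
Qed.

Definition hmap_t (P : {mpoly k[n]}) : {poly A} :=
  mmap (polyC \o (@mpolyC _ k)) (fun i => (f i)%:P * 'X) P.

Lemma reesMap_embT P : reesMap f (embT P) = hmap_t P.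
Proof.
rewrite /embT /map_mpoly rmorph_mmap.
by apply: eq_mmap => [c|i] /=; rewrite ?reesMapC ?reesMapX.
Qed.

Lemma hmap_t1 P : (hmap_t P).[1] = hmap f P.
Proof.
rewrite -[LHS]/(horner_eval 1 (hmap_t P)) rmorph_mmap.
by apply: eq_mmap => [c|i] /=; rewrite /horner_eval ?hornerC // hornerMX hornerC mulr1.
Qed.

Variables (d : nat) (hf : forall i, f i \is d.-homog).

Lemma hmap_t_comp_Xn P : hmap_t P \Po 'X^d = substXt (hmap f P).
Proof.
rewrite /hmap_t /hmap [LHS](rmorph_mmap (comp_poly 'X^d)) [RHS]rmorph_mmap.
apply: eq_mmap => [c|i] /=; first by rewrite comp_polyC [RHS]mmapC.
by rewrite -[RHS]/(substXt (f i)) (substXt_homog (hf i)) comp_polyM comp_polyC comp_polyX.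
Qed.

Lemma reesMap_embT_eq0 P : (0 < d)%N -> (reesMap f (embT P) == 0) = (hmap f P == 0).
Proof.
move=> d_gt0; rewrite reesMap_embT; apply/eqP/eqP => hP.
  by rewrite -hmap_t1 hP horner0.
apply/eqP; rewrite -(@comp_poly_eq0 _ _ 'X^d) ?size_polyXn //.
by rewrite hmap_t_comp_Xn hP /substXt mmap0.
Qed.

End SymRees.

Section LinearTypeOutsideM.
Variables (k : fieldType) (n : nat) (f : 'I_n -> {mpoly k[n.-1]}).
Local Notation A := {mpoly k[n.-1]}.
Local Notation AT := {mpoly A[n]}.

Lemma ann_symKer_ideal (H : AT) : is_ideal (fun s : A => symKer f (s%:MP * H)).
Proof.
have [I0 ID IM] := ideal_gen_is_ideal (symrel f).
split.
- by rewrite mpolyC0 mul0r.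
- by move=> a b Ja Jb; rewrite mpolyCD mulrDl; apply: ID.
- by move=> a b Jb; rewrite mpolyCM -mulrA; apply: IM.
Qed.

Hypothesis hlin : linear_type_outside_m f.

Lemma reesMap_ker_mIdeal_nilpotent (H : AT) (x : A) :
  reesMap f H = 0 -> mIdeal x -> exists e, symKer f ((x ^+ e)%:MP * H).
Proof.
move=> hH mx; apply: contrapT => no_e.
have avJ : avoids_powers x (fun s => symKer f (s%:MP * H)).
  by move=> e Je; apply: no_e; exists e.
have [p [p_prime Jp npx]] := exists_prime_avoiding_powers (ann_symKer_ideal H) avJ.
have [|s [nps Js]] := hlin p_prime _ hH; first by move=> m_p; exact/npx/m_p.
exact/nps/Jp.
Qed.

Lemma reesMap_ker_mIdeal_torsion (H : AT) : reesMap f H = 0 ->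
  exists N, forall a : 'X_{1..n.-1}, mdeg a = N -> symKer f (('X_[a] : A)%:MP * H).
Proof.
move=> hH; have [_ _ JM] := ann_symKer_ideal H.
have /choice [e he] : forall i : 'I_n.-1, exists e, symKer f (('X_i ^+ e : A)%:MP * H).
  by move=> i; apply: reesMap_ker_mIdeal_nilpotent => //; apply: ideal_gen_mem; exists i.
by exists (\sum_i e i).+1; exact: (monomials_in_ideal JM he).
Qed.

End LinearTypeOutsideM.

Theorem mainTheorem14 (k : fieldType) (n : nat) (hn : (3 <= n)%N)
  (d : nat) (hd : (1 <= d)%N) (f : 'I_n -> {mpoly k[n.-1]})
  (hf : forall i, f i \is d.-homog) (hf0 : forall i, f i != 0)
  (hlin : linear_type_outside_m f) (eta : int)
  (hH0 : forall nu : nat, (eta <= nu%:Z)%R -> H0m_vanishes_at f nu) :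
  forall nu : nat, (eta <= nu%:Z)%R ->
    forall P : {mpoly k[n]}, annSym f nu P <-> hmap f P = 0.
Proof.
move=> nu hnu P; split=> [annP | hP G hG].
- have i0 : 'I_n.-1 by exists 0%N; rewrite -subn1 subn_gt0 (leq_trans _ hn).
  pose Xnu : {mpoly k[n.-1]} := 'X_[U_(i0) *+ nu].
  have Xnu_homog : Xhomog nu (Xnu%:MP : {mpoly {mpoly k[n.-1]}[n]}).
    by apply: Xhomog_mpolyC; rewrite dhomogX /= mdegMn mdeg1 mul1n.
  have Xnu_neq0 : Xnu != 0 by rewrite -msupp_eq0 msuppX.
  have := reesMap_symKer (annP _ Xnu_homog); rewrite rmorphM /= reesMapC.
  move/eqP; rewrite mulf_eq0 polyC_eq0 (negbTE Xnu_neq0) orbF => hrees.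
  by apply/eqP; rewrite -(reesMap_embT_eq0 hf P hd).
- apply: (hH0 nu hnu); first exact: Xhomog_embTM.
  apply: (reesMap_ker_mIdeal_torsion hlin); rewrite rmorphM /=.
  have /eqP -> : reesMap f (embT P) == 0 by rewrite (reesMap_embT_eq0 hf P hd) hP.
  by rewrite mul0r.
Qed.
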